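(* Fix any total budget $\mathrm{TB}\in\mathbb N_0$ and let $G$ be a game form. Suppose that Left has an optimal $0$-bid strategy in $(G,0)$. Then $G\ge 0$ if and only if $o(G,0)=\mathrm L$.
   Context: Game forms are defined recursively: $G=\{G^{\mathcal L}\mid G^{\mathcal R}\}$ where $G^{\mathcal L}$ (Left options) and $G^{\mathcal R}$ (Right options) are finite sets of game forms, and every game form has finite birthday (all play is finite). $0=\{\varnothing\mid\varnothing\}$. A follower of $G$ is any game form reachable from $G$ by a (possibly empty) sequence of moves of either player in any order. Fix a total budget $\mathrm{TB}\in\mathbb N_0$. The budget set is $\mathcal B=\{0,\dots,\mathrm{TB},\hat 0,\dots,\widehat{\mathrm{TB}}\}$: state $p$ (resp. $\hat p$) means Left holds $p$ dollars and Right holds $\mathrm{TB}-p$, and Right (resp. Left) holds the tie-breaking marker. A game $(G,\tilde p)$ is played as follows: at every position (terminal ones included) both players bid simultaneously, Left an integer $\ell$ with $0\le \ell\le p$, Right an integer $r$ with $0\le r\le \mathrm{TB}-p$. If Left holds the marker (state $\hat p$): if $\ell>r$ Left wins and moves to $(G^L,\widehat{p-\ell})$, or, including the marker in her payment (allowed when $\ell\ge r$), to $(G^L,p-\ell)$; if $\ell=r$ Left wins, the marker passes to Right, and play continues at $(G^L,p-\ell)$; if $\ell<r$ Right wins and moves to $(G^R,\widehat{p+r})$. Symmetrically when Right holds the marker (state $p$): if $r>\ell$ Right moves to $(G^R,p+r)$ or, including the marker, to $(G^R,\widehat{p+r})$; if $r=\ell$ Right wins, the marker passes to Left and play continues at $(G^R,\widehat{p+r})$;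 if $r<\ell$ Left moves to $(G^L,p-\ell)$. A player who wins a bid but has no option in the current game form loses. The partial outcome $o(G,\tilde p)\in\{\mathrm L,\mathrm R\}$ is the winner under optimal play (well defined via backward induction); $\mathrm L>\mathrm R$. Disjunctive sum: $G+H=\{G^{\mathcal L}+H,\,G+H^{\mathcal L}\mid G^{\mathcal R}+H,\,G+H^{\mathcal R}\}$. $G\ge H$ means: for every game form $X$ and every $\tilde p\in\mathcal B$, $o(G+X,\tilde p)\ge o(H+X,\tilde p)$. Left has an optimal $0$-bid strategy in $(G,\tilde p)$ if bidding $0$ is an optimal bid for Left at every follower position arising in play from $(G,\tilde p)$. *)

From mathcomp Require Import all_boot.
Set Implicit Arguments. Unset Strict Implicit. Unset Printing Implicit Defensive.

(* Game forms: a game form is given by a finite list of Left options and a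
   finite list of Right options (lists represent the finite sets; duplicates
   are irrelevant for everything below). Finite birthday is automatic. *)
Inductive game : Type := Game of seq game & seq game.

Definition leftOpts (G : game) : seq game := let: Game l _ := G in l.
Definition rightOpts (G : game) : seq game := let: Game _ r := G in r.

Definition zero : game := Game [::] [::].

Fixpoint add (G H : game) {struct G} : game :=
  let: Game gl gr := G in
  let fix addG (H : game) : game :=
      let: Game hl hr := H in
      Game ([seq add g H | g <- gl] ++ [seq addG h | h <- hl])
           ([seq add g H | g <- gr] ++ [seq addG h | h <- hr])
  in addG H.

(* A state is a pair (p, m) with p : nat (Left's dollars,
   Right holds TB - p) and m : bool, where m = true means LEFT holds the
   tie-breaking marker (the paper's \hat p) and m = false means RIGHT holds
   it (the paper's plain p).  Valid states have p <= TB.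
   Outcomes are booleans: true = L, false = R (so L > R is true > false). *)

(* A winner of the bid without any option loses (has over [::] = false for
   Left; all over [::] = true for Right). *)
Definition round (o : game -> nat -> bool -> bool) (gl gr : seq game)
    (p : nat) (m : bool) (l r : nat) : bool :=
  if m then
    if r < l then has (fun g => o g (p - l) true || o g (p - l) false) gl
    else if l == r then has (fun g => o g (p - l) false) gl
    else all (fun g => o g (p + r) true) gr
  else
    if l < r then all (fun g => o g (p + r) false && o g (p + r) true) gr
    else if l == r then all (fun g => o g (p + r) true) gr
    else has (fun g => o g (p - l) false) gl.

Fixpoint outcome (TB : nat) (G : game) (p : nat) (m : bool) {struct G} : bool :=
  let: Game gl gr := G in
  has (fun l =>
         all (fun r => round (outcome TB) gl gr p m l r) (iota 0 (TB - p).+1))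
      (iota 0 p.+1).

Definition bid_wins (TB : nat) (G : game) (p : nat) (m : bool) (l : nat) : bool :=
  all (fun r => round (outcome TB) (leftOpts G) (rightOpts G) p m l r)
      (iota 0 (TB - p).+1).

Definition optimal_bid (TB : nat) (G : game) (p : nat) (m : bool) (l : nat) : bool :=
  outcome TB G p m ==> bid_wins TB G p m l.

(* Left has an optimal 0-bid strategy in (G,(p,m)): bidding 0 is optimal
   for Left at every position arising in play from (G,(p,m)) when Left
   always bids 0 (Right's bids, and both players' choices of options and of
   marker inclusion, are arbitrary). *)
Fixpoint zero_bid_opt (TB : nat) (G : game) (p : nat) (m : bool) {struct G} : bool :=
  let: Game gl gr := G in
  optimal_bid TB (Game gl gr) p m 0 &&
  all (fun r =>
         if m then
           if 0 < r then all (fun g => zero_bid_opt TB g (p + r) true) gr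
           else (* tie: Left wins, marker passes to Right *)
             all (fun g => zero_bid_opt TB g p false) gl
         else
           (* Right holds the marker: Right always wins the bid *)
           if 0 < r then
             all (fun g => zero_bid_opt TB g (p + r) false &&
                           zero_bid_opt TB g (p + r) true) gr
           else all (fun g => zero_bid_opt TB g p true) gr)
      (iota 0 (TB - p).+1).

Definition game_ge (TB : nat) (G H : game) : Prop :=
  forall (X : game) (p : nat) (m : bool), p <= TB ->
    outcome TB (add H X) p m ==> outcome TB (add G X) p m.

(* Since bidding 0 is optimal for Left throughout (G, 0) and she wins there, she wins G by
   bidding 0 at every position, starting with no money and without the marker.  Given X that
   Left wins from some budget state, she wins G + X by following her winning strategy of X
   and answering Right's moves in G with 0 bids: each dollar Right pays for a move in G is
   credited to the G component, where extra money never hurts a player who only bids 0.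
   When Left holds the marker she assigns it to one component; a marker held in G is worth
   a dollar there ([zero_bid_win_marker]), and if her winning bid l in X is positive she
   bids l - 1 with the marker instead and credits the saved dollar to G.  Conversely,
   G >= 0 applied with X = 0 gives o(G, 0) = L. *)

From mathcomp Require Import all_boot zify.
Set Implicit Arguments. Unset Strict Implicit.

Lemma game_ind_In (P : game -> Prop) :
  (forall gl gr, (forall g, List.In g gl -> P g) -> (forall g, List.In g gr -> P g) ->
     P (Game gl gr)) ->
  forall G, P G.
Proof.
(* The guard condition only accepts [F] on immediate options, so no [done] may run here. *)
move=> IH; fix F 1 => -[gl gr]; apply: IH.
- elim: gl => [|g gl IHl] x; first by case.
  by case=> [<- | /IHl]; [apply: F | apply].
- elim: gr => [|g gr IHr] x; first by case.
  by case=> [<- | /IHr]; [apply: F | apply].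
Qed.

Section ListIn.
Variables (T : Type) (a : pred T).

Lemma allInP s : reflect (forall x, List.In x s -> a x) (all a s).
Proof.
elim: s => [|y s IHs] /=; first by left.
apply: (iffP andP) => [[ay /IHs sa] x [<- | /sa] // | sa].
by split; [apply: sa; left | apply/IHs => x sx; apply: sa; right].
Qed.

Lemma hasInP s : reflect (exists2 x, List.In x s & a x) (has a s).
Proof.
elim: s => [|y s IHs] /=; first by right; case.
apply: (iffP orP) => [[ay | /IHs [x sx ax]] | [x [<- | sx] ax]].
- by exists y; first left.
- by exists x; first right.
- by left.
- by right; apply/IHs; exists x.
Qed.

Lemma eq_in_all_In (b : pred T) s :
  (forall x, List.In x s -> a x = b x) -> all a s = all b s.
Proof.
by elim: s => //= y s IHs ab; rewrite ab ?IHs //; [move=> x sx; apply: ab; right | left].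
Qed.

Lemma eq_in_has_In (b : pred T) s :
  (forall x, List.In x s -> a x = b x) -> has a s = has b s.
Proof.
by elim: s => //= y s IHs ab; rewrite ab ?IHs //; [move=> x sx; apply: ab; right | left].
Qed.

End ListIn.

Section MapCat.
Context {T U : Type} {a : pred U} {f h : T -> U} {s1 s2 : seq T}.

Lemma has_map_catl_In x : List.In x s1 -> a (f x) -> has a (map f s1 ++ map h s2).
Proof. by move=> x_in ax; rewrite has_cat has_map; apply/orP; left; apply/hasInP; exists x. Qed.

Lemma has_map_catr_In x : List.In x s2 -> a (h x) -> has a (map f s1 ++ map h s2).
Proof. by move=> x_in ax; rewrite has_cat !has_map; apply/orP; right; apply/hasInP; exists x. Qed.

Lemma all_map_cat_In :
  (forall x, List.In x s1 -> a (f x)) -> (forall x, List.In x s2 -> a (h x)) ->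
  all a (map f s1 ++ map h s2).
Proof. by move=> a1 a2; rewrite all_cat !all_map; apply/andP; split; apply/allInP. Qed.

End MapCat.

Section RoundCases.
Variables (o : game -> nat -> bool -> bool) (gl gr : seq game) (p : nat).

Lemma round_markerL_win l r :
  r < l -> round o gl gr p true l r = has (fun g => o g (p - l) true || o g (p - l) false) gl.
Proof. by rewrite /round => ->. Qed.

Lemma round_markerL_tie l : round o gl gr p true l l = has (fun g => o g (p - l) false) gl.
Proof. by rewrite /round ltnn eqxx. Qed.

Lemma round_markerL_lose l r :
  l < r -> round o gl gr p true l r = all (fun g => o g (p + r) true) gr.
Proof. by move=> lr; rewrite /round ltnNge (ltnW lr) ltn_eqF. Qed.

Lemma round_markerR_win l r :
  r < l -> round o gl gr p false l r = has (fun g => o g (p - l) false) gl.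
Proof. by move=> rl; rewrite /round ltnNge (ltnW rl) gtn_eqF. Qed.

Lemma round_markerR_tie l : round o gl gr p false l l = all (fun g => o g (p + l) true) gr.
Proof. by rewrite /round ltnn eqxx. Qed.

Lemma round_markerR_lose l r :
  l < r -> round o gl gr p false l r = all (fun g => o g (p + r) false && o g (p + r) true) gr.
Proof. by rewrite /round => ->. Qed.

End RoundCases.

Section Outcome.
Variable TB : nat.

Lemma bid_winsP gl gr p m l :
  reflect (forall r, r <= TB - p -> round (outcome TB) gl gr p m l r)
          (bid_wins TB (Game gl gr) p m l).
Proof.
apply: (iffP allP) => [wins r rp | wins r]; first by apply: wins; rewrite mem_iota.
by rewrite mem_iota => /andP[_ rp]; apply: wins.
Qed.

Lemma outcomeP gl gr p m :
  reflect (exists2 l, l <= p & bid_wins TB (Game gl gr) p m l) (outcome TB (Game gl gr) p m).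
Proof.
apply: (iffP hasP) => [[l] | [l lp wins]].
  by rewrite mem_iota => /andP[_ lp] wins; exists l.
by exists l; first by rewrite mem_iota.
Qed.

Lemma outcome_zero : outcome TB zero 0 false.
Proof. by apply/outcomeP; exists 0 => //; apply/bid_winsP => -[]. Qed.

Lemma outcome_map (f : game -> game) gl gr p m :
  (forall g, List.In g gl \/ List.In g gr -> forall p m, outcome TB (f g) p m = outcome TB g p m) ->
  outcome TB (Game (map f gl) (map f gr)) p m = outcome TB (Game gl gr) p m.
Proof.
move=> fo.
have eq_round l r : round (outcome TB) (map f gl) (map f gr) p m l r =
                    round (outcome TB) gl gr p m l r.
  rewrite /round; case: m; repeat case: ifP => _;
    rewrite ?has_map ?all_map; first [apply: eq_in_has_In | apply: eq_in_all_In];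
    by move=> g g_opt /=; rewrite !fo //; tauto.
by apply: eq_in_has_In => l _; apply: eq_in_all_In => r _; apply: eq_round.
Qed.

Lemma outcome_add0l X p m : outcome TB (add zero X) p m = outcome TB X p m.
Proof.
elim/game_ind_In: X p m => xl xr IHl IHr p m.
have -> : add zero (Game xl xr) = Game (map (add zero) xl) (map (add zero) xr) by [].
by apply: outcome_map => g [/IHl | /IHr].
Qed.

Lemma outcome_addr0 G p m : outcome TB (add G zero) p m = outcome TB G p m.
Proof.
elim/game_ind_In: G p m => gl gr IHl IHr p m.
have -> : add (Game gl gr) zero = Game (map (add^~ zero) gl) (map (add^~ zero) gr).
  by rewrite /= !cats0.
by apply: outcome_map => g [/IHl | /IHr].
Qed.

End Outcome.

Section ZeroBidWin.
Variable TB : nat.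

Fixpoint zero_bid_win (G : game) (s : nat) (m : bool) {struct G} : bool :=
  let: Game gl gr := G in
  (if m then has (fun g => zero_bid_win g s false) gl
   else all (fun g => zero_bid_win g s true) gr) &&
  all (fun r => all (fun g => zero_bid_win g (s + r) true &&
                              (m || zero_bid_win g (s + r) false)) gr)
      (iota 1 (TB - s)).

Lemma zero_bid_winP gl gr s m :
  reflect ((if m then exists2 g, List.In g gl & zero_bid_win g s false
            else forall g, List.In g gr -> zero_bid_win g s true) /\
           (forall r g, 0 < r <= TB - s -> List.In g gr ->
              zero_bid_win g (s + r) true /\ (~~ m -> zero_bid_win g (s + r) false)))
          (zero_bid_win (Game gl gr) s m).
Proof.
apply: (iffP andP) => -[tie rbid]; split.
- by case: m tie rbid => [/hasInP | /allInP].
- move=> r g r_range g_opt.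
  have r_in : r \in iota 1 (TB - s) by rewrite mem_iota; lia.
  have /andP[win_hat win] := allInP _ _ (allP rbid r r_in) g g_opt.
  by split=> // /negbTE m_false; rewrite m_false in win.
- by case: m tie rbid => [/hasInP | /allInP].
- apply/allP => r; rewrite mem_iota => r_range; apply/allInP => g g_opt.
  have [win_hat win] := rbid r g ltac:(lia) g_opt.
  by apply/andP; split=> //; case: m tie rbid win => // _ _; apply.
Qed.

Lemma zero_bid_win_succ G s m : zero_bid_win G s m -> zero_bid_win G s.+1 m.
Proof.
elim/game_ind_In: G s m => gl gr IHl IHr s m /zero_bid_winP[tie rbid].
apply/zero_bid_winP; split.
- case: m tie rbid => [[g g_opt win] _ | tie _]; first by exists g => //; apply: IHl.
  by move=> g g_opt; apply: IHr (tie g g_opt).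
- by move=> r g r_range g_opt; rewrite addSnnS; apply: rbid => //; lia.
Qed.

Lemma zero_bid_win_marker G s :
  s < TB -> zero_bid_win G s true -> zero_bid_win G s.+1 false.
Proof.
elim/game_ind_In: G s => gl gr _ IHr s s_lt /zero_bid_winP[_ rbid].
apply/zero_bid_winP; split.
- by move=> g g_opt; rewrite -addn1; apply: (rbid 1 g _ g_opt).1; lia.
- move=> r g r_range g_opt; split=> [|_].
  + by rewrite addSnnS; apply: (rbid r.+1 g _ g_opt).1; lia.
  + by rewrite addSn; apply: IHr g g_opt _ _ (rbid r g _ g_opt).1; lia.
Qed.

End ZeroBidWin.

Lemma zero_bid_opt_win TB G p m :
  zero_bid_opt TB G p m -> outcome TB G p m -> zero_bid_win TB G p m.
Proof.
elim/game_ind_In: G p m => gl gr IHl IHr p m /andP[/implyP opt0 /allP zbo_next].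
move=> /opt0 /bid_winsP win0; apply/zero_bid_winP; split.
- have := win0 0 (leq0n _); have := zbo_next 0; rewrite mem_iota => /(_ isT).
  case: m {opt0 win0 zbo_next} => /allInP zbo_opts.
  + rewrite round_markerL_tie subn0 => /hasInP[g g_opt win].
    by exists g => //; apply: IHl (zbo_opts g g_opt) win.
  + rewrite round_markerR_tie addn0 => /allInP win g g_opt.
    exact: IHr (zbo_opts g g_opt) (win g g_opt).
- move=> r g /andP[r_pos r_le] g_opt.
  have := win0 r r_le; have := zbo_next r; rewrite mem_iota r_pos => /(_ r_le).
  case: m {opt0 win0 zbo_next} => /allInP zbo_opts.
  + rewrite round_markerL_lose // => /allInP win.
    by split=> //; apply: IHr (zbo_opts g g_opt) (win g g_opt).
  + rewrite round_markerR_lose // => /allInP win.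
    case/andP: (zbo_opts g g_opt) (win g g_opt) => zbo zbo_hat /andP[w w_hat].
    by split=> [|_]; [apply: IHr zbo_hat w_hat | apply: IHr zbo w].
Qed.

Lemma add_Game gl gr xl xr :
  add (Game gl gr) (Game xl xr) =
  Game (map (add^~ (Game xl xr)) gl ++ map (add (Game gl gr)) xl)
       (map (add^~ (Game xl xr)) gr ++ map (add (Game gl gr)) xr).
Proof. by []. Qed.

Lemma bid_wins_right_move TB xl xr q l r x :
  bid_wins TB (Game xl xr) q false l -> l <= r <= TB - q -> List.In x xr ->
  outcome TB x (q + r) true.
Proof.
move=> /bid_winsP win /andP[lr r_le] x_opt; have := win r r_le.
case: (ltngtP l r) lr => // [lr | <-] _.
- by rewrite round_markerR_lose // => /allInP/(_ x x_opt)/andP[].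
- by rewrite round_markerR_tie => /allInP; apply.
Qed.

Section SplitWin.
Variable TB : nat.

(* Left's budget q + s in G + X is split into q dollars for a win in X and s dollars for a
   0-bid win in G; the last three constructors are the possible uses of Left's marker. *)
Inductive split_win (X : game) (q : nat) (G : game) (s : nat) : bool -> Prop :=
  | SplitMarkerR of outcome TB X q false & zero_bid_win TB G s false :
      split_win X q G s false
  | SplitMarkerInX of outcome TB X q true & zero_bid_win TB G s false :
      split_win X q G s true
  | SplitMarkerInG of bid_wins TB X q false 0 & zero_bid_win TB G s true :
      split_win X q G s true
  | SplitMarkerAsDollar l of 0 < l <= q & bid_wins TB X q false l & zero_bid_win TB G s false :
      split_win X q G s true.

Lemma split_win_bid X q G s l :
  l <= q -> bid_wins TB X q false l ->
  (l = 0 -> zero_bid_win TB G s true) -> (0 < l -> zero_bid_win TB G s false) ->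
  split_win X q G s true.
Proof.
case: (posnP l) => [-> | l_pos] lq win Gwin_hat Gwin.
  by apply: SplitMarkerInG => //; apply: Gwin_hat.
by apply: (SplitMarkerAsDollar (l := l)); [rewrite l_pos | | apply: Gwin].
Qed.

Definition sum_wins (G X : game) : Prop :=
  forall q s P M, P = q + s -> P <= TB -> split_win X q G s M -> outcome TB (add G X) P M.

Section InductionStep.
Variables gl gr xl xr : seq game.
Hypothesis IHgl : forall g, List.In g gl -> sum_wins g (Game xl xr).
Hypothesis IHgr : forall g, List.In g gr -> sum_wins g (Game xl xr).
Hypothesis IHxl : forall x, List.In x xl -> sum_wins (Game gl gr) x.
Hypothesis IHxr : forall x, List.In x xr -> sum_wins (Game gl gr) x.

Lemma sum_wins_markerR q s :
  q + s <= TB -> outcome TB (Game xl xr) q false -> zero_bid_win TB (Game gl gr) s false ->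
  outcome TB (add (Game gl gr) (Game xl xr)) (q + s) false.
Proof.
move=> qs_le Xwin Gwin; have /zero_bid_winP[Gtie Grbid] := Gwin.
have /outcomeP[l lq /[dup] Xbid /bid_winsP Xround] := Xwin.
rewrite add_Game; apply/outcomeP; exists l; first lia.
apply/bid_winsP => r r_le; have := Xround r ltac:(lia).
case: (ltngtP l r) r_le => [lr | rl | <-] r_le.
- rewrite !round_markerR_lose // => /allInP Xopts.
  apply: all_map_cat_In => [g g_opt | x x_opt].
  + have [win_hat /(_ isT) win] := Grbid r g ltac:(lia) g_opt.
    apply/andP; split; apply: (IHgr g_opt (q := q) (s := s + r)); try lia.
    * exact: SplitMarkerR.
    * exact: split_win_bid lq Xbid (fun=> win_hat) (fun=> win).
  + case/andP: (Xopts x x_opt) => xwin xwin_hat.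
    apply/andP; split; apply: (IHxr x_opt (q := q + r) (s := s)); try lia.
    * exact: SplitMarkerR.
    * exact: SplitMarkerInX.
- rewrite !round_markerR_win // => /hasInP[x x_opt xwin].
  apply: (has_map_catr_In x_opt); apply: (IHxl x_opt (q := q - l) (s := s)); try lia.
  exact: SplitMarkerR.
- rewrite !round_markerR_tie => /allInP Xopts.
  apply: all_map_cat_In => [g g_opt | x x_opt].
  + apply: (IHgr g_opt (q := q) (s := s + l)); try lia.
    apply: (split_win_bid lq Xbid) => [l0 | l_pos].
    * by rewrite l0 addn0; apply: Gtie.
    * by apply: (Grbid l g _ g_opt).2; lia.
  + apply: (IHxr x_opt (q := q + l) (s := s)); try lia.
    exact: SplitMarkerInX (Xopts x x_opt) Gwin.
Qed.

Lemma sum_wins_markerInX q s :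
  q + s <= TB -> outcome TB (Game xl xr) q true -> zero_bid_win TB (Game gl gr) s false ->
  outcome TB (add (Game gl gr) (Game xl xr)) (q + s) true.
Proof.
move=> qs_le Xwin Gwin; have /zero_bid_winP[_ Grbid] := Gwin.
have /outcomeP[l lq /bid_winsP Xround] := Xwin.
rewrite add_Game; apply/outcomeP; exists l; first lia.
apply/bid_winsP => r r_le; have := Xround r ltac:(lia).
case: (ltngtP l r) r_le => [lr | rl | <-] r_le.
- rewrite !round_markerL_lose // => /allInP Xopts.
  apply: all_map_cat_In => [g g_opt | x x_opt].
  + have [_ /(_ isT) win] := Grbid r g ltac:(lia) g_opt.
    apply: (IHgr g_opt (q := q) (s := s + r)); try lia.
    exact: SplitMarkerInX Xwin win.
  + apply: (IHxr x_opt (q := q + r) (s := s)); try lia.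
    exact: SplitMarkerInX (Xopts x x_opt) Gwin.
- rewrite !round_markerL_win // => /hasInP[x x_opt /orP xwin_l].
  apply: (has_map_catr_In x_opt); apply/orP.
  case: xwin_l => [xwin_hat | xwin]; [left | right];
    apply: (IHxl x_opt (q := q - l) (s := s)); try lia.
  + exact: SplitMarkerInX.
  + exact: SplitMarkerR.
- rewrite !round_markerL_tie => /hasInP[x x_opt xwin].
  apply: (has_map_catr_In x_opt); apply: (IHxl x_opt (q := q - l) (s := s)); try lia.
  exact: SplitMarkerR.
Qed.

Lemma sum_wins_markerInG q s :
  q + s <= TB -> bid_wins TB (Game xl xr) q false 0 -> zero_bid_win TB (Game gl gr) s true ->
  outcome TB (add (Game gl gr) (Game xl xr)) (q + s) true.
Proof.
move=> qs_le Xbid Gwin_hat; have /zero_bid_winP[[g g_opt Gwin] Grbid] := Gwin_hat.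
have Xwin : outcome TB (Game xl xr) q false by apply/outcomeP; exists 0.
rewrite add_Game; apply/outcomeP; exists 0 => //.
apply/bid_winsP => r r_le; case: (posnP r) => [-> | r_pos].
- rewrite round_markerL_tie subn0; apply: (has_map_catl_In g_opt).
  apply: (IHgl g_opt (q := q) (s := s)); try lia.
  exact: SplitMarkerR.
- rewrite round_markerL_lose //; apply: all_map_cat_In => [g' g'_opt | x x_opt].
  + apply: (IHgr g'_opt (q := q) (s := s + r)); try lia.
    by apply: SplitMarkerInG; last apply: (Grbid r g' _ g'_opt).1; lia.
  + apply: (IHxr x_opt (q := q + r.-1) (s := s.+1)); try lia.
    apply: SplitMarkerInX; first by apply: bid_wins_right_move Xbid _ x_opt; lia.
    by apply: zero_bid_win_marker Gwin_hat; lia.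
Qed.

Lemma sum_wins_markerAsDollar q s l :
  q + s <= TB -> 0 < l <= q -> bid_wins TB (Game xl xr) q false l ->
  zero_bid_win TB (Game gl gr) s false ->
  outcome TB (add (Game gl gr) (Game xl xr)) (q + s) true.
Proof.
move=> qs_le l_range Xbid Gwin; have /zero_bid_winP[_ Grbid] := Gwin.
have /bid_winsP Xround := Xbid.
rewrite add_Game; apply/outcomeP; exists l.-1; first lia.
apply/bid_winsP => r r_le; case: (ltnP r l) => [rl | lr].
- have := Xround r ltac:(lia); rewrite round_markerR_win // => /hasInP[x x_opt xwin].
  have sum_win : outcome TB (add (Game gl gr) x) (q + s - l.-1) false.
    apply: (IHxl x_opt (q := q - l) (s := s.+1)); try lia.
    by apply: SplitMarkerR xwin _; apply: zero_bid_win_succ.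
  case: (ltngtP r l.-1) => [r_lt | | ->]; try lia.
  + by rewrite round_markerL_win //; apply: (has_map_catr_In x_opt); rewrite sum_win orbT.
  + by rewrite round_markerL_tie; apply: (has_map_catr_In x_opt).
- rewrite round_markerL_lose; last lia.
  apply: all_map_cat_In => [g g_opt | x x_opt].
  + apply: (IHgr g_opt (q := q) (s := s + r)); try lia.
    by apply: (SplitMarkerAsDollar (l := l)) => //; apply: (Grbid r g _ g_opt).2; lia.
  + apply: (IHxr x_opt (q := q + r) (s := s)); try lia.
    by apply: SplitMarkerInX Gwin; apply: bid_wins_right_move Xbid _ x_opt; lia.
Qed.

End InductionStep.

Lemma outcome_add_split_win G X : sum_wins G X.
Proof.
elim/game_ind_In: G X => gl gr IHgl IHgr X.
elim/game_ind_In: X => xl xr IHxl IHxr q s P M -> P_le.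
have IHgl' g (g_opt : List.In g gl) := IHgl g g_opt (Game xl xr).
have IHgr' g (g_opt : List.In g gr) := IHgr g g_opt (Game xl xr).
case=> [Xwin Gwin | Xwin Gwin | Xbid Gwin | l l_range Xbid Gwin].
- exact: sum_wins_markerR.
- exact: sum_wins_markerInX.
- exact: sum_wins_markerInG.
- exact: sum_wins_markerAsDollar l_range Xbid Gwin.
Qed.

End SplitWin.

Theorem mainTheorem1 (TB : nat) (G : game) :
  zero_bid_opt TB G 0 false ->
  (game_ge TB G zero <-> outcome TB G 0 false = true).
Proof.
move=> G_zbo; split.
- move=> /(_ zero 0 false (leq0n _)).
  by rewrite outcome_add0l outcome_addr0 outcome_zero.
- move=> Gwin X p m p_le; rewrite outcome_add0l; apply/implyP => Xwin.
  have Gzero := zero_bid_opt_win G_zbo Gwin.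
  apply: (outcome_add_split_win (q := p) (s := 0)); rewrite ?addn0 //.
  by case: m Xwin => Xwin; [apply: SplitMarkerInX | apply: SplitMarkerR].
Qed.
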